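(* Let $(\mathcal C,\otimes,I)$ be a monoidal category and $M$ a strong monad on $\mathcal C$ with strength $\tau$. Assume that for every object $A$ the algebraically free monad $T_A=(G_A)^*$ of the strong endofunctor $G_A X = A\otimes MX$ exists and is strongly generated. Then the forgetful functor $U:\mathbf{EMMon}_M\to\mathcal C$ has a left adjoint $F:\mathcal C\to\mathbf{EMMon}_M$ given by $FA=\langle M T_A I,\ \mu^M_{T_A I},\ \mathfrak m,\ \mathfrak u\rangle$ and $Ff = M t_f$ for $f:A\to B$, where $\mathfrak m$, $\mathfrak u$ and $t_f$ are as described in the context.
   Context: Structural isomorphisms of the monoidal category are written $\cong$. A strong monad $M$ has a strength $\tau_{A,B}: MA\otimes B\to M(A\otimes B)$, natural and compatible with unitor, associator, $\eta$ and $\mu$ (i.e. $\tau\circ(\eta\otimes\mathrm{id})=\eta$, $\tau\circ(\mu\otimes\mathrm{id})=\mu\circ M\tau\circ\tau$). A monoid is $\langle A, m: A\otimes A\to A, u: I\to A\rangle$ with the usual laws. An Eilenberg--Moore $M$-monoid is $\langle A, a: MA\to A, m, u\rangle$ with $\langle A,a\rangle$ an Eilenberg--Moore $M$-algebra, $\langle A,m,u\rangle$ a monoid, and $m\circ(a\otimes\mathrm{id}_A)=a\circ Mm\circ\tau_{A,A}$. Morphisms are $\mathcal C$-morphisms that are both $M$-algebra and monoid morphisms; this is the category $\mathbf{EMMon}_M$, and $U\langle A,a,m,u\rangle=A$. For an endofunctor $G$, the algebraically free monad $G^*$ exists if the forgetful functor from $G$-algebras $\langle C, c: GC\to C\rangle$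 to $\mathcal C$ has a left adjoint; the free algebra on $X$ is $\langle G^*X,\mathsf{cons}_X: GG^*X\to G^*X\rangle$ with unit $\eta^{\mathcal F}_X$. For strong $G$ (strength $\tau^G$), $G^*$ is strongly generated if for every $f: X\otimes Y\to C$ and $G$-algebra $\langle C,c\rangle$ there is a unique $\widehat f: G^*X\otimes Y\to C$ with $\widehat f\circ(\eta^{\mathcal F}\otimes\mathrm{id})=f$ and $\widehat f\circ(\mathsf{cons}\otimes\mathrm{id})=c\circ G\widehat f\circ \tau^G$; then $G^*$ has strength $\widetilde\tau_{X,Y}=\widehat f$ for $f=\eta^{\mathcal F}_{X\otimes Y}$ and the algebra $\langle G^*(X\otimes Y),\mathsf{cons}\rangle$. $G_A X=A\otimes MX$ is strong via $(A\otimes MX)\otimes Y\xrightarrow{\cong}A\otimes(MX\otimes Y)\xrightarrow{\mathrm{id}\otimes\tau}A\otimes M(X\otimes Y)$. Resumption monad $R_A X = M T_A X$: unit $\eta^R=\eta^M\circ\eta^{\mathcal F}$; for $f: X\to R_AY$, let $k: T_AX\to R_AY$ be the unique $G_A$-algebra morphism from $\langle T_AX,\mathsf{cons}_X\rangle$ to $\langle R_AY,\ \eta^M_{T_AY}\circ\mathsf{cons}_Y\circ(\mathrm{id}_A\otimes \mu^M_{T_AY})\rangle$ with $k\circ\eta^{\mathcal F}_X=f$, and set $f^\#=\mu^M_{T_AY}\circ Mk$; multiplication $\mu^R_X=(\mathrm{id}_{R_AX})^\#$. Strength $\tau^R_{X,Y}=M\widetilde\tau_{X,Y}\circ\tau_{T_AX,Y}$.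 Then $\mathfrak u=\eta^R_I: I\to R_AI$ and $\mathfrak m = \mu^R_I\circ R_A(\cong)\circ\tau^R_{I,R_AI}: R_AI\otimes R_AI\to R_A(I\otimes R_AI)\to R_AR_AI\to R_AI$. For $f:A\to B$, $t_f: T_AI\to T_BI$ is the unique $G_A$-algebra morphism from $\langle T_AI,\mathsf{cons}\rangle$ to $\langle T_BI,\ \mathsf{cons}\circ(f\otimes\mathrm{id})\rangle$ with $t_f\circ\eta^{\mathcal F}_I=\eta^{\mathcal F}_I$. *)

From Stdlib Require Import ClassicalEpsilon.

Set Implicit Arguments.
Unset Strict Implicit.

Record Cat := {
  ob :> Type;
  hom : ob -> ob -> Type;
  idm : forall A : ob, hom A A;
  comp : forall A B D : ob, hom B D -> hom A B -> hom A D;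
  comp_idl : forall A B (f : hom A B), comp (idm B) f = f;
  comp_idr : forall A B (f : hom A B), comp f (idm A) = f;
  comp_assoc : forall A B D E (f : hom A B) (g : hom B D) (h : hom D E),
      comp h (comp g f) = comp (comp h g) f
}.
Arguments hom {c} _ _.
Arguments idm {c} _.
Arguments comp {c A B D} _ _.

Declare Scope cat_scope.
Open Scope cat_scope.
Notation "g ∘ f" := (comp g f) (at level 40, left associativity) : cat_scope.

Record Monoidal (C : Cat) := {
  tens : C -> C -> C;
  tensm : forall A A' B B' : C, hom A A' -> hom B B' -> hom (tens A B) (tens A' B');
  unitI : C;
  tensm_id : forall A B : C, tensm (idm A) (idm B) = idm (tens A B);
  tensm_comp : forall A A' A'' B B' B'' (f : hom A A') (f' : hom A' A'')
      (g : hom B B') (g' : hom B' B''),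
      tensm (f' ∘ f) (g' ∘ g) = tensm f' g' ∘ tensm f g;
  alpha : forall A B D : C, hom (tens (tens A B) D) (tens A (tens B D));
  alpha_inv : forall A B D : C, hom (tens A (tens B D)) (tens (tens A B) D);
  alpha_iso1 : forall A B D, alpha A B D ∘ alpha_inv A B D = idm _;
  alpha_iso2 : forall A B D, alpha_inv A B D ∘ alpha A B D = idm _;
  alpha_nat : forall A A' B B' D D' (f : hom A A') (g : hom B B') (h : hom D D'),
      alpha A' B' D' ∘ tensm (tensm f g) h = tensm f (tensm g h) ∘ alpha A B D;
  lam : forall A : C, hom (tens unitI A) A;
  lam_inv : forall A : C, hom A (tens unitI A);
  lam_iso1 : forall A, lam A ∘ lam_inv A = idm _;
  lam_iso2 : forall A, lam_inv A ∘ lam A = idm _;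
  lam_nat : forall A A' (f : hom A A'), lam A' ∘ tensm (idm unitI) f = f ∘ lam A;
  rho : forall A : C, hom (tens A unitI) A;
  rho_inv : forall A : C, hom A (tens A unitI);
  rho_iso1 : forall A, rho A ∘ rho_inv A = idm _;
  rho_iso2 : forall A, rho_inv A ∘ rho A = idm _;
  rho_nat : forall A A' (f : hom A A'), rho A' ∘ tensm f (idm unitI) = f ∘ rho A;
  pentagon : forall A B D E,
      alpha A B (tens D E) ∘ alpha (tens A B) D E
      = tensm (idm A) (alpha B D E) ∘ alpha A (tens B D) E ∘ tensm (alpha A B D) (idm E);
  triangle : forall A B,
      tensm (idm A) (lam B) ∘ alpha A unitI B = tensm (rho A) (idm B)
}.
Arguments tens {C} m _ _.
Arguments tensm {C} m {A A' B B'} _ _.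
Arguments unitI {C} m.
Arguments alpha {C} m A B D.
Arguments lam {C} m A.
Arguments rho {C} m A.

Record StrongMonad (C : Cat) (MC : Monoidal C) := {
  Mo : C -> C;
  Mm : forall A B : C, hom A B -> hom (Mo A) (Mo B);
  Mm_id : forall A : C, Mm (idm A) = idm (Mo A);
  Mm_comp : forall A B D (f : hom A B) (g : hom B D), Mm (g ∘ f) = Mm g ∘ Mm f;
  eta : forall A : C, hom A (Mo A);
  mu : forall A : C, hom (Mo (Mo A)) (Mo A);
  eta_nat : forall A B (f : hom A B), Mm f ∘ eta A = eta B ∘ f;
  mu_nat : forall A B (f : hom A B), Mm f ∘ mu A = mu B ∘ Mm (Mm f);
  mu_assoc : forall A, mu A ∘ Mm (mu A) = mu A ∘ mu (Mo A);
  mu_eta_l : forall A, mu A ∘ eta (Mo A) = idm (Mo A);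
  mu_eta_r : forall A, mu A ∘ Mm (eta A) = idm (Mo A);
  tau : forall A B : C, hom (tens MC (Mo A) B) (Mo (tens MC A B));
  tau_nat : forall A A' B B' (f : hom A A') (g : hom B B'),
      Mm (tensm MC f g) ∘ tau A B = tau A' B' ∘ tensm MC (Mm f) g;
  tau_unit : forall A, Mm (rho MC A) ∘ tau A (unitI MC) = rho MC (Mo A);
  tau_assoc : forall A B D,
      tau A (tens MC B D) ∘ alpha MC (Mo A) B D
      = Mm (alpha MC A B D) ∘ tau (tens MC A B) D ∘ tensm MC (tau A B) (idm D);
  tau_eta : forall A B, tau A B ∘ tensm MC (eta A) (idm B) = eta (tens MC A B);
  tau_mu : forall A B,
      tau A B ∘ tensm MC (mu A) (idm B) = mu (tens MC A B) ∘ Mm (tau A B) ∘ tau (Mo A) B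
}.
Arguments Mo {C MC} s _.
Arguments Mm {C MC} s {A B} _.
Arguments eta {C MC} s A.
Arguments mu {C MC} s A.
Arguments tau {C MC} s A B.

Unset Implicit Arguments.
Section Theory.
Context {C : Cat} {MC : Monoidal C} (M : StrongMonad MC).

Local Notation "A ⊗ B" := (tens MC A B) (at level 35).
Local Notation "f ⊠ g" := (tensm MC f g) (at level 35).
Local Notation I := (unitI MC).

Definition GA_str (A X Y : C) : hom ((A ⊗ Mo M X) ⊗ Y) (A ⊗ Mo M (X ⊗ Y)) :=
  (idm A ⊠ tau M X Y) ∘ alpha MC A (Mo M X) Y.

(* For every A, the free G_A-algebra on X is <T A X, cons A X> with unit etaF A X
   (i.e. the algebraically free monad T_A = (G_A)^* exists). *)
Definition AlgFree (T : C -> C -> C)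
    (cons : forall A X : C, hom (A ⊗ Mo M (T A X)) (T A X))
    (etaF : forall A X : C, hom X (T A X)) : Prop :=
  forall (A X D : C) (c : hom (A ⊗ Mo M D) D) (f : hom X D),
    exists! h : hom (T A X) D,
      h ∘ etaF A X = f /\ h ∘ cons A X = c ∘ (idm A ⊠ Mm M h).

Definition StronglyGenerated (T : C -> C -> C)
    (cons : forall A X : C, hom (A ⊗ Mo M (T A X)) (T A X))
    (etaF : forall A X : C, hom X (T A X)) : Prop :=
  forall (A X Y D : C) (c : hom (A ⊗ Mo M D) D) (f : hom (X ⊗ Y) D),
    exists! h : hom (T A X ⊗ Y) D,
      h ∘ (etaF A X ⊠ idm Y) = f /\
      h ∘ (cons A X ⊠ idm Y) = c ∘ (idm A ⊠ Mm M h) ∘ GA_str A (T A X) Y.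

Definition is_EMMonoid (X : C) (a : hom (Mo M X) X) (m : hom (X ⊗ X) X)
    (u : hom I X) : Prop :=
  a ∘ eta M X = idm X /\ a ∘ Mm M a = a ∘ mu M X /\
  m ∘ (m ⊠ idm X) = m ∘ (idm X ⊠ m) ∘ alpha MC X X X /\
  m ∘ (u ⊠ idm X) = lam MC X /\ m ∘ (idm X ⊠ u) = rho MC X /\
  m ∘ (a ⊠ idm X) = a ∘ Mm M m ∘ tau M X X.

Definition is_EMMon_hom (X : C) (a : hom (Mo M X) X) (m : hom (X ⊗ X) X) (u : hom I X)
    (Y : C) (b : hom (Mo M Y) Y) (n : hom (Y ⊗ Y) Y) (v : hom I Y) (h : hom X Y) : Prop :=
  h ∘ a = b ∘ Mm M h /\ h ∘ m = n ∘ (h ⊠ h) /\ h ∘ u = v.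

(* The forgetful functor U : EMMon_M -> C has a left adjoint F whose object
   part is A |-> <Fo A, Fa A, Fm A, Fu A> and whose morphism part is Fh. *)
Definition LeftAdjointToU (Fo : C -> C) (Fa : forall A, hom (Mo M (Fo A)) (Fo A))
    (Fm : forall A, hom (Fo A ⊗ Fo A) (Fo A)) (Fu : forall A, hom I (Fo A))
    (Fh : forall A B : C, hom A B -> hom (Fo A) (Fo B)) : Prop :=
  (forall A, is_EMMonoid (Fo A) (Fa A) (Fm A) (Fu A)) /\
  (forall A B (f : hom A B),
      is_EMMon_hom (Fo A) (Fa A) (Fm A) (Fu A) (Fo B) (Fa B) (Fm B) (Fu B) (Fh A B f)) /\
  (forall A, Fh A A (idm A) = idm (Fo A)) /\
  (forall A B D (f : hom A B) (g : hom B D), Fh A D (g ∘ f) = Fh B D g ∘ Fh A B f) /\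
  exists unit : forall A, hom A (Fo A),
    (forall A B (f : hom A B), Fh A B f ∘ unit A = unit B ∘ f) /\
    (forall (A Y : C) (b : hom (Mo M Y) Y) (n : hom (Y ⊗ Y) Y) (v : hom I Y),
        is_EMMonoid Y b n v ->
        forall g : hom A Y,
          exists! h : hom (Fo A) Y,
            is_EMMon_hom (Fo A) (Fa A) (Fm A) (Fu A) Y b n v h /\ h ∘ unit A = g).

Section Resumption.
Context (T : C -> C -> C)
        (cons : forall A X : C, hom (A ⊗ Mo M (T A X)) (T A X))
        (etaF : forall A X : C, hom X (T A X))
        (Hfree : AlgFree T cons etaF) (Hstr : StronglyGenerated T cons etaF).

Definition free_ext (A X D : C) (c : hom (A ⊗ Mo M D) D) (f : hom X D) : hom (T A X) D :=
  proj1_sig (constructive_indefinite_description _ (Hfree A X D c f)).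

Definition str_ext (A X Y D : C) (c : hom (A ⊗ Mo M D) D) (f : hom (X ⊗ Y) D)
  : hom (T A X ⊗ Y) D :=
  proj1_sig (constructive_indefinite_description _ (Hstr A X Y D c f)).

Definition RA (A X : C) : C := Mo M (T A X).

Definition etaR (A X : C) : hom X (RA A X) := eta M (T A X) ∘ etaF A X.

Definition R_alg (A Y : C) : hom (A ⊗ Mo M (RA A Y)) (RA A Y) :=
  eta M (T A Y) ∘ cons A Y ∘ (idm A ⊠ mu M (T A Y)).

Definition sharp (A X Y : C) (f : hom X (RA A Y)) : hom (RA A X) (RA A Y) :=
  mu M (T A Y) ∘ Mm M (free_ext A X (RA A Y) (R_alg A Y) f).

Definition muR (A X : C) : hom (RA A (RA A X)) (RA A X) := sharp A (RA A X) X (idm (RA A X)).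

Definition Rmap (A X Y : C) (g : hom X Y) : hom (RA A X) (RA A Y) :=
  sharp A X Y (etaR A Y ∘ g).

Definition tauT (A X Y : C) : hom (T A X ⊗ Y) (T A (X ⊗ Y)) :=
  str_ext A X Y (T A (X ⊗ Y)) (cons A (X ⊗ Y)) (etaF A (X ⊗ Y)).

Definition tauR (A X Y : C) : hom (RA A X ⊗ Y) (RA A (X ⊗ Y)) :=
  Mm M (tauT A X Y) ∘ tau M (T A X) Y.

Definition frak_u (A : C) : hom I (RA A I) := etaR A I.

Definition frak_m (A : C) : hom (RA A I ⊗ RA A I) (RA A I) :=
  muR A I ∘ Rmap A (I ⊗ RA A I) (RA A I) (lam MC (RA A I)) ∘ tauR A I (RA A I).

Definition t_f (A B : C) (f : hom A B) : hom (T A I) (T B I) :=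
  free_ext A I (T B I) (cons B I ∘ (f ⊠ idm (Mo M (T B I)))) (etaF B I).

End Resumption.
End Theory.

(* The free Eilenberg--Moore M-monoid on A is the resumption object R = M T_A I.  Strong
   generation, applied to λ and the G_A-algebra structure of R, gives the concatenation
   ψ : T_A I ⊗ R → R of a tree with a resumption, and the multiplication is μ ∘ Mψ ∘ τ.
   Each monoid law compares two maps out of some T_A I ⊗ X obeying the same recursion, so
   it follows from the uniqueness part of strong generation.  The unit of the adjunction
   sends a to the one-step resumption η (cons (a, u)).  Given an EM M-monoid (Y, b, n, v)
   and g : A → Y, freeness gives the G_A-algebra morphism k : T_A I → Y into
   (Y, n ∘ (g ⊗ b)) with k ∘ η = v, and b ∘ M k is the induced morphism; any other one,
   restricted along η, is again a G_A-algebra morphism, hence equal to k. *)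

From Stdlib Require Import ClassicalEpsilon.

Ltac cat_norm :=
  try unfold RA; repeat rewrite comp_assoc; repeat rewrite comp_idl; repeat rewrite comp_idr.

Ltac instantiate_all H :=
  repeat lazymatch type of H with
  | forall x : ?T, _ => let e := fresh in evar (e : T); specialize (H e); subst e
  end.

Ltac prepend_leftmost X t :=
  lazymatch t with
  | @comp _ _ _ _ ?g ?f => let u := prepend_leftmost X g in constr:(comp u f)
  | _ => constr:(comp X t)
  end.

(* Rewriting modulo associativity in goals left-associated by [cat_norm]: if [lhs] is
   not literally a subterm, a subterm [X ∘ lhs] with the composition re-associated to
   the left is rewritten instead. *)
Ltac arewrite_with H0 :=
  try unfold RA in H0;
  first
  [ rewrite H0; repeat rewrite comp_assoc
  | lazymatch type of H0 with
    | @eq _ ?lhs ?rhs =>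
        match goal with
        | |- context [ @comp _ _ _ _ ?X _ ] =>
            let l' := prepend_leftmost X lhs in
            let H := fresh in
            assert (H : l' = comp X rhs) by
              (etransitivity; [| exact (f_equal (@comp _ _ _ _ X) H0)];
               repeat rewrite comp_assoc; reflexivity);
            try unfold RA in H; rewrite H; clear H; repeat rewrite comp_assoc
        end
    end ].

Tactic Notation "arewrite" uconstr(L) :=
  try unfold RA; let H0 := fresh in epose proof L as H0; instantiate_all H0;
  arewrite_with H0; clear H0.
Tactic Notation "arewrite" "<-" uconstr(L) :=
  try unfold RA; let H0 := fresh in epose proof L as H0; instantiate_all H0;
  symmetry in H0; arewrite_with H0; clear H0.

Ltac merge_tensors := repeat (arewrite <- tensm_comp; cat_norm); cat_norm.

Section MonoidalFacts.
Context {C : Cat} {MC : Monoidal C}.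
Local Notation "A ⊗ B" := (tens MC A B) (at level 35).
Local Notation "f ⊠ g" := (tensm MC f g) (at level 35).
Local Notation I := (unitI MC).

Lemma tensm_lr {A A' B B'} (f : hom A A') (g : hom B B') :
  f ⊠ g = (f ⊠ idm B') ∘ (idm A ⊠ g).
Proof. rewrite <- tensm_comp. cat_norm. reflexivity. Qed.

Lemma tensm_rl {A A' B B'} (f : hom A A') (g : hom B B') :
  f ⊠ g = (idm A' ⊠ g) ∘ (f ⊠ idm B).
Proof. rewrite <- tensm_comp. cat_norm. reflexivity. Qed.

Lemma tensm_compl {A A' A'' B} (f : hom A A') (f' : hom A' A'') :
  (f' ∘ f) ⊠ idm B = (f' ⊠ idm B) ∘ (f ⊠ idm B).
Proof. rewrite <- tensm_comp. cat_norm. reflexivity. Qed.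

Lemma tensm_compr {A B B' B''} (g : hom B B') (g' : hom B' B'') :
  idm A ⊠ (g' ∘ g) = (idm A ⊠ g') ∘ (idm A ⊠ g).
Proof. rewrite <- tensm_comp. cat_norm. reflexivity. Qed.

Lemma tensm_comp_idl {A A' A'' B B'} (f : hom A' A'') (f' : hom A A') (g : hom B B') :
  (f ∘ f') ⊠ g = (f ⊠ idm B') ∘ (f' ⊠ g).
Proof. rewrite <- tensm_comp. cat_norm. reflexivity. Qed.

Lemma tensm_interchange {A A' B B'} (f : hom A A') (g : hom B B') :
  (f ⊠ idm B') ∘ (idm A ⊠ g) = (idm A' ⊠ g) ∘ (f ⊠ idm B).
Proof. rewrite <- tensm_lr, <- tensm_rl. reflexivity. Qed.

Lemma alpha_inv_nat {A A' B B' D D'} (f : hom A A') (g : hom B B') (h : hom D D') :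
  alpha_inv MC A' B' D' ∘ (f ⊠ (g ⊠ h)) = ((f ⊠ g) ⊠ h) ∘ alpha_inv MC A B D.
Proof.
  rewrite <- (comp_idr (_ ∘ _)), <- (alpha_iso1 MC A B D). cat_norm.
  arewrite <- (alpha_nat MC f g h). rewrite alpha_iso2. cat_norm. reflexivity.
Qed.

Lemma rho_inv_nat {A A'} (f : hom A A') : rho_inv MC A' ∘ f = (f ⊠ idm I) ∘ rho_inv MC A.
Proof.
  rewrite <- (comp_idr (_ ∘ f)), <- (rho_iso1 MC A). cat_norm.
  arewrite <- (rho_nat MC f). rewrite rho_iso2. cat_norm. reflexivity.
Qed.

Lemma alpha_cancel {A B D E} (a b : hom (A ⊗ (B ⊗ D)) E) :
  a ∘ alpha MC A B D = b ∘ alpha MC A B D -> a = b.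
Proof.
  intro H. rewrite <- (comp_idr a), <- (comp_idr b), <- (alpha_iso1 MC A B D).
  cat_norm. rewrite H. reflexivity.
Qed.

Lemma alpha_cancel_l {A B D E} (a b : hom E ((A ⊗ B) ⊗ D)) :
  alpha MC A B D ∘ a = alpha MC A B D ∘ b -> a = b.
Proof.
  intro H. rewrite <- (comp_idl a), <- (comp_idl b), <- (alpha_iso2 MC A B D).
  rewrite <- !comp_assoc, H. reflexivity.
Qed.

Lemma tensm_iso_cancel {A A' B E} (i : hom A A') (j : hom A' A) (ij : i ∘ j = idm A')
    (a b : hom (A' ⊗ B) E) :
  a ∘ (i ⊠ idm B) = b ∘ (i ⊠ idm B) -> a = b.
Proof.
  intro H. rewrite <- (comp_idr a), <- (comp_idr b), <- tensm_id, <- ij.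
  rewrite <- (comp_idl (idm B)), tensm_comp. cat_norm. rewrite H. reflexivity.
Qed.

Lemma unit_tensm_inj {A B} (f g : hom A B) : idm I ⊠ f = idm I ⊠ g -> f = g.
Proof.
  intro H. rewrite <- (comp_idr f), <- (comp_idr g), <- (lam_iso1 MC A). cat_norm.
  arewrite <- (lam_nat MC f). arewrite <- (lam_nat MC g). rewrite H. reflexivity.
Qed.

Lemma tensm_unit_inj {A B} (f g : hom A B) : f ⊠ idm I = g ⊠ idm I -> f = g.
Proof.
  intro H. rewrite <- (comp_idr f), <- (comp_idr g), <- (rho_iso1 MC A). cat_norm.
  arewrite <- (rho_nat MC f). arewrite <- (rho_nat MC g). rewrite H. reflexivity.
Qed.

Lemma rho_alpha A B : (idm A ⊠ rho MC B) ∘ alpha MC A B I = rho MC (A ⊗ B).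
Proof.
  apply tensm_unit_inj, alpha_cancel_l. symmetry.
  rewrite <- (triangle MC (A ⊗ B) I), <- (tensm_id MC A B). cat_norm.
  arewrite (alpha_nat MC (idm A) (idm B) (lam MC I)).
  arewrite (pentagon MC A B I I).
  arewrite <- (tensm_compr (A := A) (alpha MC B I I) (idm B ⊠ lam MC I)).
  cat_norm. rewrite triangle.
  arewrite <- (alpha_nat MC (idm A) (rho MC B) (idm I)).
  arewrite <- (tensm_compl (B := I) (alpha MC A B I) (idm A ⊠ rho MC B)).
  reflexivity.
Qed.

Lemma lam_alpha A B : lam MC A ⊠ idm B = lam MC (A ⊗ B) ∘ alpha MC I A B.
Proof.
  apply unit_tensm_inj, alpha_cancel.
  apply (tensm_iso_cancel _ _ (alpha_iso1 MC I I A)).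
  rewrite tensm_compr. cat_norm.
  arewrite <- (pentagon MC I I A B). arewrite (triangle MC I (A ⊗ B)).
  rewrite <- (tensm_id MC A B).
  arewrite <- (alpha_nat MC (rho MC I) (idm A) (idm B)).
  arewrite <- (alpha_nat MC (idm I) (lam MC A) (idm B)).
  arewrite <- (tensm_compl (B := B) (alpha MC I I A) (idm I ⊠ lam MC A)).
  rewrite triangle. reflexivity.
Qed.

Lemma rho_tensm_unit A : rho MC (A ⊗ I) = rho MC A ⊠ idm I.
Proof.
  rewrite <- (comp_idl (rho MC (A ⊗ I))), <- (rho_iso2 MC A), <- comp_assoc.
  rewrite <- (rho_nat MC (rho MC A)). cat_norm. rewrite rho_iso2. cat_norm. reflexivity.
Qed.

Lemma lam_unit : lam MC I = rho MC I.
Proof.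
  apply unit_tensm_inj, alpha_cancel.
  rewrite triangle, rho_alpha. symmetry. apply rho_tensm_unit.
Qed.

End MonoidalFacts.

Section StrongMonadFacts.
Context {C : Cat} {MC : Monoidal C} (M : StrongMonad MC).
Local Notation "A ⊗ B" := (tens MC A B) (at level 35).
Local Notation "f ⊠ g" := (tensm MC f g) (at level 35).

Lemma mu_Mm_eta {X Y} (k : hom X (Mo M Y)) : mu M Y ∘ Mm M k ∘ eta M X = k.
Proof. rewrite <- comp_assoc, eta_nat. cat_norm. rewrite mu_eta_l. cat_norm. reflexivity. Qed.

Lemma tau_assoc_inv X Y Z :
  tau M (X ⊗ Y) Z ∘ (tau M X Y ⊠ idm Z)
  = Mm M (alpha_inv MC X Y Z) ∘ tau M X (Y ⊗ Z) ∘ alpha MC (Mo M X) Y Z.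
Proof.
  rewrite <- comp_assoc, tau_assoc. cat_norm.
  rewrite <- Mm_comp, alpha_iso2, Mm_id. cat_norm. reflexivity.
Qed.

Lemma GA_str_nat {A A' X X' Y Y'} (a : hom A A') (x : hom X X') (y : hom Y Y') :
  GA_str M A' X' Y' ∘ ((a ⊠ Mm M x) ⊠ y) = (a ⊠ Mm M (x ⊠ y)) ∘ GA_str M A X Y.
Proof.
  unfold GA_str. cat_norm. arewrite (alpha_nat MC a (Mm M x) y).
  rewrite <- (tensm_comp MC a (idm A') (Mm M x ⊠ y) (tau M X' Y')).
  rewrite <- (tensm_comp MC (idm A) a (tau M X Y) (Mm M (x ⊠ y))).
  rewrite (tau_nat M x y). cat_norm. reflexivity.
Qed.

Lemma GA_str_natr A X {Y Y'} (y : hom Y Y') :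
  GA_str M A X Y' ∘ (idm (A ⊗ Mo M X) ⊠ y)
  = (idm A ⊠ Mm M (idm X ⊠ y)) ∘ GA_str M A X Y.
Proof. rewrite <- (GA_str_nat (idm A) (idm X) y), Mm_id, tensm_id. reflexivity. Qed.

Lemma GA_str_assoc A X Y Z :
  (idm A ⊠ Mm M (alpha MC X Y Z)) ∘ GA_str M A (X ⊗ Y) Z ∘ (GA_str M A X Y ⊠ idm Z)
  = GA_str M A X (Y ⊗ Z) ∘ alpha MC (A ⊗ Mo M X) Y Z.
Proof.
  unfold GA_str. rewrite tensm_compl. cat_norm.
  arewrite (alpha_nat MC (idm A) (tau M X Y) (idm Z)).
  arewrite <- (tensm_compr (A := A) (tau M (X ⊗ Y) Z) (Mm M (alpha MC X Y Z))).
  arewrite <- (tensm_compr (A := A) (tau M X Y ⊠ idm Z)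
                 (Mm M (alpha MC X Y Z) ∘ tau M (X ⊗ Y) Z)).
  cat_norm. rewrite <- tau_assoc, tensm_compr. cat_norm.
  arewrite <- (pentagon MC A (Mo M X) Y Z). reflexivity.
Qed.

Lemma GA_str_assoc_inv A X Y Z :
  GA_str M A (X ⊗ Y) Z ∘ (GA_str M A X Y ⊠ idm Z) ∘ alpha_inv MC (A ⊗ Mo M X) Y Z
  = (idm A ⊠ Mm M (alpha_inv MC X Y Z)) ∘ GA_str M A X (Y ⊗ Z).
Proof.
  rewrite <- (comp_idl (GA_str M A (X ⊗ Y) Z)), <- tensm_id, <- Mm_id.
  rewrite <- (alpha_iso2 MC X Y Z), Mm_comp, tensm_compr. cat_norm.
  arewrite (GA_str_assoc A X Y Z). cat_norm.
  arewrite (alpha_iso1 MC (A ⊗ Mo M X) Y Z). cat_norm. reflexivity.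
Qed.

End StrongMonadFacts.

Section Resumption.
Context {C : Cat} {MC : Monoidal C} (M : StrongMonad MC).
Local Notation "A ⊗ B" := (tens MC A B) (at level 35).
Local Notation "f ⊠ g" := (tensm MC f g) (at level 35).
Local Notation I := (unitI MC).
Context (T : C -> C -> C)
        (cons : forall A X : C, hom (A ⊗ Mo M (T A X)) (T A X))
        (etaF : forall A X : C, hom X (T A X))
        (Hfree : AlgFree M T cons etaF) (Hstr : StronglyGenerated M T cons etaF).
Local Notation fe := (free_ext M T cons etaF Hfree).
Local Notation se := (str_ext M T cons etaF Hstr).
Local Notation Ralg := (R_alg M T cons).
Local Notation tf := (t_f M T cons etaF Hfree).
Local Notation R A := (Mo M (T A I)).
Local Notation runit A := (eta M (T A I) ∘ etaF A I).

Lemma free_ext_spec A X D c f :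
  (fe A X D c f ∘ etaF A X = f /\
   fe A X D c f ∘ cons A X = c ∘ (idm A ⊠ Mm M (fe A X D c f))) /\
  forall h, h ∘ etaF A X = f /\ h ∘ cons A X = c ∘ (idm A ⊠ Mm M h) -> fe A X D c f = h.
Proof. exact (proj2_sig (constructive_indefinite_description _ (Hfree A X D c f))). Qed.

Lemma free_ext_eta A X D c f : fe A X D c f ∘ etaF A X = f.
Proof. apply free_ext_spec. Qed.

Lemma free_ext_cons A X D c f : fe A X D c f ∘ cons A X = c ∘ (idm A ⊠ Mm M (fe A X D c f)).
Proof. apply free_ext_spec. Qed.

Lemma free_ext_unique A X D c f h :
  h ∘ etaF A X = f -> h ∘ cons A X = c ∘ (idm A ⊠ Mm M h) -> h = fe A X D c f.
Proof. intros Heta Hcons. symmetry. apply free_ext_spec. split; assumption. Qed.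

Lemma str_ext_spec A X Y D c f :
  (se A X Y D c f ∘ (etaF A X ⊠ idm Y) = f /\
   se A X Y D c f ∘ (cons A X ⊠ idm Y)
   = c ∘ (idm A ⊠ Mm M (se A X Y D c f)) ∘ GA_str M A (T A X) Y) /\
  forall h, h ∘ (etaF A X ⊠ idm Y) = f /\
            h ∘ (cons A X ⊠ idm Y) = c ∘ (idm A ⊠ Mm M h) ∘ GA_str M A (T A X) Y ->
    se A X Y D c f = h.
Proof. exact (proj2_sig (constructive_indefinite_description _ (Hstr A X Y D c f))). Qed.

Lemma str_ext_eta A X Y D c f : se A X Y D c f ∘ (etaF A X ⊠ idm Y) = f.
Proof. apply str_ext_spec. Qed.

Lemma str_ext_cons A X Y D c f :
  se A X Y D c f ∘ (cons A X ⊠ idm Y)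
  = c ∘ (idm A ⊠ Mm M (se A X Y D c f)) ∘ GA_str M A (T A X) Y.
Proof. apply str_ext_spec. Qed.

Lemma str_ext_unique A X Y D c f h :
  h ∘ (etaF A X ⊠ idm Y) = f ->
  h ∘ (cons A X ⊠ idm Y) = c ∘ (idm A ⊠ Mm M h) ∘ GA_str M A (T A X) Y ->
  h = se A X Y D c f.
Proof. intros Heta Hcons. symmetry. apply str_ext_spec. split; assumption. Qed.

Lemma str_ext_eq A X Y D (c : hom (A ⊗ Mo M D) D) (h1 h2 : hom (T A X ⊗ Y) D) :
  h1 ∘ (etaF A X ⊠ idm Y) = h2 ∘ (etaF A X ⊠ idm Y) ->
  h1 ∘ (cons A X ⊠ idm Y) = c ∘ (idm A ⊠ Mm M h1) ∘ GA_str M A (T A X) Y ->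
  h2 ∘ (cons A X ⊠ idm Y) = c ∘ (idm A ⊠ Mm M h2) ∘ GA_str M A (T A X) Y ->
  h1 = h2.
Proof.
  intros Heta Hcons1 Hcons2.
  rewrite (str_ext_unique _ _ _ _ c _ h1 Heta Hcons1). symmetry.
  apply str_ext_unique; [reflexivity | assumption].
Qed.

Lemma tauT_eta A X Y : tauT M T cons etaF Hstr A X Y ∘ (etaF A X ⊠ idm Y) = etaF A (X ⊗ Y).
Proof. apply str_ext_eta. Qed.

Lemma tauT_cons A X Y :
  tauT M T cons etaF Hstr A X Y ∘ (cons A X ⊠ idm Y)
  = cons A (X ⊗ Y) ∘ (idm A ⊠ Mm M (tauT M T cons etaF Hstr A X Y)) ∘ GA_str M A (T A X) Y.
Proof. apply str_ext_cons. Qed.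

Lemma R_alg_mu A Y :
  Ralg A Y ∘ (idm A ⊠ mu M (Mo M (T A Y))) = Ralg A Y ∘ (idm A ⊠ Mm M (mu M (T A Y))).
Proof.
  unfold R_alg. cat_norm.
  arewrite <- (tensm_compr (A := A) (mu M (Mo M (T A Y))) (mu M (T A Y))).
  arewrite <- (tensm_compr (A := A) (Mm M (mu M (T A Y))) (mu M (T A Y))).
  rewrite mu_assoc. reflexivity.
Qed.

Definition tmul A : hom (T A I ⊗ R A) (R A) := se A I (R A) (R A) (Ralg A I) (lam MC (R A)).

Definition rmul A : hom (R A ⊗ R A) (R A) :=
  mu M (T A I) ∘ Mm M (tmul A) ∘ tau M (T A I) (R A).

Lemma tmul_eta A : tmul A ∘ (etaF A I ⊠ idm (R A)) = lam MC (R A).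
Proof. apply str_ext_eta. Qed.

Lemma tmul_cons A :
  tmul A ∘ (cons A I ⊠ idm (R A))
  = Ralg A I ∘ (idm A ⊠ Mm M (tmul A)) ∘ GA_str M A (T A I) (R A).
Proof. apply str_ext_cons. Qed.

Lemma frak_m_eq A : frak_m M T cons etaF Hfree Hstr A = rmul A.
Proof.
  unfold frak_m, muR, Rmap, tauR, sharp, rmul.
  set (k1 := fe A (R A) (R A) (Ralg A I) (idm (R A))).
  set (k2 := fe A (I ⊗ R A) (Mo M (T A (R A))) (Ralg A (R A))
                (etaR M T etaF A (R A) ∘ lam MC (R A))).
  set (tT := tauT M T cons etaF Hstr A I (R A)).
  assert (Htmul : mu M (T A I) ∘ Mm M k1 ∘ k2 ∘ tT = tmul A).
  { apply (str_ext_eq _ _ _ _ (Ralg A I)).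
    - rewrite tmul_eta. cat_norm. unfold tT. arewrite tauT_eta.
      unfold k2. arewrite free_ext_eta. unfold etaR. cat_norm.
      arewrite (mu_Mm_eta M k1). unfold k1. arewrite free_ext_eta. cat_norm. reflexivity.
    - cat_norm. unfold tT. arewrite (tauT_cons A I (R A)).
      unfold k2. arewrite (free_ext_cons A (I ⊗ R A) (Mo M (T A (R A)))).
      unfold R_alg at 1. cat_norm.
      arewrite (mu_Mm_eta M k1). unfold k1. arewrite (free_ext_cons A (R A) (R A)).
      fold k1 k2 tT. rewrite !Mm_comp, !tensm_compr. cat_norm.
      arewrite <- (tensm_compr (A := A) (mu M (T A (R A))) (Mm M k1)).
      rewrite mu_nat, tensm_compr. cat_norm.
      arewrite (R_alg_mu A I). reflexivity.
    - apply tmul_cons. }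
  rewrite <- Htmul. unfold k1, k2, tT. rewrite !Mm_comp. cat_norm.
  arewrite (mu_nat M). arewrite (mu_assoc M (T A I)). reflexivity.
Qed.


Lemma tmul_runit A : tmul A ∘ (idm (T A I) ⊠ runit A) = eta M (T A I) ∘ rho MC (T A I).
Proof.
  apply (str_ext_eq _ _ _ _ (Ralg A I)).
  - arewrite <- (tensm_interchange (etaF A I) (runit A)). arewrite tmul_eta.
    arewrite (lam_nat MC (runit A)). arewrite (rho_nat MC (etaF A I)).
    rewrite lam_unit. reflexivity.
  - arewrite <- (tensm_interchange (cons A I) (runit A)). arewrite tmul_cons.
    arewrite GA_str_natr. repeat arewrite <- tensm_compr.
    repeat arewrite <- (Mm_comp M). reflexivity.
  - arewrite (rho_nat MC (cons A I)). unfold R_alg, GA_str. rewrite !Mm_comp. cat_norm.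
    repeat arewrite <- tensm_compr. arewrite mu_eta_r. cat_norm.
    arewrite tau_unit. arewrite rho_alpha. reflexivity.
Qed.

Lemma rmul_eta A {X} (x : hom X (T A I)) :
  rmul A ∘ ((eta M (T A I) ∘ x) ⊠ idm (R A)) = tmul A ∘ (x ⊠ idm (R A)).
Proof.
  unfold rmul. rewrite tensm_compl. cat_norm.
  arewrite tau_eta. arewrite (eta_nat M (tmul A)). arewrite mu_eta_l. cat_norm. reflexivity.
Qed.

Lemma rmul_unitl A : rmul A ∘ (runit A ⊠ idm (R A)) = lam MC (R A).
Proof. rewrite rmul_eta. apply tmul_eta. Qed.

Lemma rmul_unitr A : rmul A ∘ (idm (R A) ⊠ runit A) = rho MC (R A).
Proof.
  unfold rmul. rewrite <- (Mm_id M (T A I)).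
  arewrite <- (tau_nat M (idm (T A I)) (runit A)). repeat arewrite <- (Mm_comp M).
  rewrite tmul_runit, Mm_comp. cat_norm. arewrite mu_eta_r. cat_norm. apply tau_unit.
Qed.

Lemma rmul_mu A :
  rmul A ∘ (mu M (T A I) ⊠ idm (R A)) = mu M (T A I) ∘ Mm M (rmul A) ∘ tau M (R A) (R A).
Proof.
  unfold rmul. rewrite !Mm_comp. cat_norm.
  arewrite tau_mu. arewrite (mu_nat M (tmul A)). arewrite (mu_assoc M (T A I)). reflexivity.
Qed.

Lemma rmul_R_alg A :
  rmul A ∘ (Ralg A I ⊠ idm (R A))
  = Ralg A I ∘ (idm A ⊠ Mm M (rmul A)) ∘ GA_str M A (R A) (R A).
Proof.
  unfold R_alg at 1. rewrite <- comp_assoc, rmul_eta, tensm_compl. cat_norm.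
  arewrite tmul_cons. unfold GA_str. cat_norm.
  arewrite (alpha_nat MC (idm A) (mu M (T A I)) (idm (R A))). repeat arewrite <- tensm_compr.
  arewrite tau_mu. arewrite (mu_nat M (tmul A)). rewrite !tensm_compr. cat_norm.
  arewrite (R_alg_mu A I). unfold rmul. rewrite !Mm_comp. repeat arewrite <- tensm_compr.
  reflexivity.
Qed.

(* Both sides are the strong extension of [rmul A ∘ λ] along [R_alg]. *)
Lemma tmul_rmul A :
  rmul A ∘ (tmul A ⊠ idm (R A)) ∘ alpha_inv MC (T A I) (R A) (R A)
  = tmul A ∘ (idm (T A I) ⊠ rmul A).
Proof.
  apply (str_ext_eq _ _ _ _ (Ralg A I)).
  - rewrite <- (tensm_id MC (R A) (R A)).
    arewrite (alpha_inv_nat (etaF A I) (idm (R A)) (idm (R A))).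
    arewrite <- (tensm_compl (B := R A) (etaF A I ⊠ idm (R A)) (tmul A)).
    rewrite tmul_eta. arewrite lam_alpha. arewrite (alpha_iso1 MC I (R A) (R A)).
    rewrite tensm_id. arewrite <- (tensm_interchange (etaF A I) (rmul A)).
    arewrite tmul_eta. arewrite (lam_nat MC (rmul A)). cat_norm. reflexivity.
  - rewrite <- (tensm_id MC (R A) (R A)).
    arewrite (alpha_inv_nat (cons A I) (idm (R A)) (idm (R A))).
    arewrite <- (tensm_compl (B := R A) (cons A I ⊠ idm (R A)) (tmul A)).
    rewrite tmul_cons, !tensm_compl. cat_norm.
    arewrite (rmul_R_alg A). arewrite (GA_str_nat M (idm A) (tmul A) (idm (R A))).
    arewrite GA_str_assoc_inv. rewrite !Mm_comp, !tensm_compr. cat_norm. reflexivity.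
  - arewrite <- (tensm_interchange (cons A I) (rmul A)). arewrite tmul_cons.
    arewrite GA_str_natr. rewrite !Mm_comp, !tensm_compr. cat_norm. reflexivity.
Qed.

Lemma rmul_assoc A :
  rmul A ∘ (rmul A ⊠ idm (R A))
  = rmul A ∘ (idm (R A) ⊠ rmul A) ∘ alpha MC (R A) (R A) (R A).
Proof.
  unfold rmul at 2. rewrite !tensm_compl. cat_norm.
  arewrite (rmul_mu A). arewrite <- (tau_nat M (tmul A) (idm (R A))).
  arewrite tau_assoc_inv. repeat arewrite <- (Mm_comp M). rewrite tmul_rmul.
  unfold rmul at 2. rewrite <- (Mm_id M (T A I)). cat_norm.
  arewrite <- (tau_nat M (idm (T A I)) (rmul A)).
  unfold rmul. repeat arewrite <- (Mm_comp M). cat_norm. reflexivity.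
Qed.

Lemma is_EMMonoid_R A : is_EMMonoid M (R A) (mu M (T A I)) (rmul A) (runit A).
Proof.
  split; [apply mu_eta_l |]. split; [apply mu_assoc |]. split; [apply rmul_assoc |].
  split; [apply rmul_unitl |]. split; [apply rmul_unitr | apply rmul_mu].
Qed.

Lemma t_f_eta A B f : tf A B f ∘ etaF A I = etaF B I.
Proof. apply free_ext_eta. Qed.

Lemma t_f_cons A B f :
  tf A B f ∘ cons A I = cons B I ∘ (f ⊠ idm (R B)) ∘ (idm A ⊠ Mm M (tf A B f)).
Proof. apply free_ext_cons. Qed.

Lemma t_f_id A : tf A A (idm A) = idm (T A I).
Proof.
  symmetry. apply free_ext_unique.
  - cat_norm. reflexivity.
  - rewrite Mm_id, !tensm_id. cat_norm. reflexivity.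
Qed.

Lemma t_f_comp A B D (f : hom A B) (g : hom B D) : tf A D (g ∘ f) = tf B D g ∘ tf A B f.
Proof.
  symmetry. apply free_ext_unique.
  - arewrite t_f_eta. apply t_f_eta.
  - arewrite t_f_cons. arewrite t_f_cons. rewrite Mm_comp. merge_tensors. reflexivity.
Qed.

Lemma Mt_f_runit A B f : Mm M (tf A B f) ∘ runit A = runit B.
Proof. cat_norm. arewrite eta_nat. arewrite t_f_eta. reflexivity. Qed.

Lemma Mt_f_R_alg A B f :
  Mm M (tf A B f) ∘ Ralg A I
  = Ralg B I ∘ (f ⊠ idm (Mo M (R B))) ∘ (idm A ⊠ Mm M (Mm M (tf A B f))).
Proof.
  unfold R_alg. cat_norm. arewrite eta_nat. arewrite t_f_cons. merge_tensors.
  arewrite (mu_nat M (tf A B f)). reflexivity.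
Qed.

Lemma tmul_t_f A B f : Mm M (tf A B f) ∘ tmul A = tmul B ∘ (tf A B f ⊠ Mm M (tf A B f)).
Proof.
  apply (str_ext_eq _ _ _ _ (Ralg B I ∘ (f ⊠ idm (Mo M (R B))))).
  - arewrite tmul_eta. merge_tensors. arewrite t_f_eta. rewrite tensm_lr. cat_norm.
    arewrite tmul_eta. arewrite (lam_nat MC). reflexivity.
  - arewrite tmul_cons. arewrite Mt_f_R_alg. rewrite !Mm_comp. merge_tensors. reflexivity.
  - merge_tensors. arewrite t_f_cons. rewrite !tensm_comp_idl. cat_norm.
    arewrite tmul_cons. merge_tensors.
    arewrite (GA_str_nat M f (tf A B f) (Mm M (tf A B f))). rewrite !Mm_comp. merge_tensors.
    reflexivity.
Qed.

Lemma rmul_t_f A B f :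
  Mm M (tf A B f) ∘ rmul A = rmul B ∘ (Mm M (tf A B f) ⊠ Mm M (tf A B f)).
Proof.
  unfold rmul. cat_norm. arewrite (mu_nat M (tf A B f)).
  repeat arewrite <- (Mm_comp M). rewrite tmul_t_f.
  arewrite <- (tau_nat M (tf A B f) (Mm M (tf A B f))). repeat arewrite <- (Mm_comp M).
  reflexivity.
Qed.

Lemma is_EMMon_hom_Mt_f A B f :
  is_EMMon_hom M (R A) (mu M (T A I)) (rmul A) (runit A)
                 (R B) (mu M (T B I)) (rmul B) (runit B) (Mm M (tf A B f)).
Proof.
  split; [apply mu_nat |]. split; [apply rmul_t_f | apply Mt_f_runit].
Qed.

Definition adj_unit A : hom A (R A) :=
  eta M (T A I) ∘ cons A I ∘ (idm A ⊠ runit A) ∘ rho_inv MC A.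

Lemma adj_unit_nat A B f : Mm M (tf A B f) ∘ adj_unit A = adj_unit B ∘ f.
Proof.
  unfold adj_unit. cat_norm. arewrite eta_nat. arewrite t_f_cons.
  arewrite <- (tensm_compr (A := A) (runit A) (Mm M (tf A B f))). cat_norm.
  arewrite eta_nat. arewrite t_f_eta.
  arewrite (rho_inv_nat f). arewrite <- (tensm_interchange f (runit B)). reflexivity.
Qed.

Lemma rmul_adj_unit A : rmul A ∘ (adj_unit A ⊠ idm (R A)) = eta M (T A I) ∘ cons A I.
Proof.
  unfold adj_unit. rewrite <- !comp_assoc, rmul_eta, !tensm_compl. cat_norm.
  arewrite tmul_cons. arewrite <- (eta_nat M (etaF A I)). rewrite tensm_compr, tensm_compl.
  cat_norm. arewrite (GA_str_nat M (idm A) (etaF A I) (idm (R A))). merge_tensors.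
  rewrite <- Mm_comp, tmul_eta, tensm_compl. unfold GA_str. cat_norm.
  arewrite (alpha_nat MC (idm A) (eta M I) (idm (R A))). merge_tensors.
  arewrite tau_eta. arewrite eta_nat. rewrite tensm_compr. cat_norm.
  arewrite triangle. arewrite <- tensm_compl. arewrite rho_iso1. rewrite tensm_id. cat_norm.
  unfold R_alg. cat_norm. arewrite <- tensm_compr. rewrite mu_eta_l, tensm_id. cat_norm.
  reflexivity.
Qed.

Section UniversalProperty.
Context (A Y : C) (b : hom (Mo M Y) Y) (n : hom (Y ⊗ Y) Y) (v : hom I Y) (g : hom A Y).
Hypothesis b_eta : b ∘ eta M Y = idm Y.
Hypothesis b_mu : b ∘ Mm M b = b ∘ mu M Y.
Hypothesis n_assoc : n ∘ (n ⊠ idm Y) = n ∘ (idm Y ⊠ n) ∘ alpha MC Y Y Y.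
Hypothesis n_unitl : n ∘ (v ⊠ idm Y) = lam MC Y.
Hypothesis n_unitr : n ∘ (idm Y ⊠ v) = rho MC Y.
Hypothesis n_b : n ∘ (b ⊠ idm Y) = b ∘ Mm M n ∘ tau M Y Y.

Definition tree_lift : hom (T A I) Y := fe A I Y (n ∘ (g ⊠ b)) v.

Definition lift : hom (R A) Y := b ∘ Mm M tree_lift.

Lemma tree_lift_eta : tree_lift ∘ etaF A I = v.
Proof. apply free_ext_eta. Qed.

Lemma tree_lift_cons : tree_lift ∘ cons A I = n ∘ (g ⊠ b) ∘ (idm A ⊠ Mm M tree_lift).
Proof. apply free_ext_cons. Qed.

Lemma n_b_Mm {X Z} (p : hom X Y) (q : hom Z Y) :
  n ∘ ((b ∘ Mm M p) ⊠ q) = b ∘ Mm M (n ∘ (p ⊠ q)) ∘ tau M X Z.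
Proof.
  rewrite tensm_comp_idl. cat_norm. arewrite n_b. rewrite Mm_comp. cat_norm.
  arewrite <- (tau_nat M p q). reflexivity.
Qed.

Lemma lift_mu : lift ∘ mu M (T A I) = b ∘ Mm M lift.
Proof.
  unfold lift. cat_norm. arewrite (mu_nat M tree_lift). arewrite <- b_mu.
  rewrite Mm_comp. cat_norm. reflexivity.
Qed.

Lemma lift_eta : lift ∘ eta M (T A I) = tree_lift.
Proof. unfold lift. cat_norm. arewrite eta_nat. arewrite b_eta. cat_norm. reflexivity. Qed.

Lemma lift_runit : lift ∘ runit A = v.
Proof. rewrite comp_assoc, lift_eta. apply tree_lift_eta. Qed.

Lemma lift_tmul : lift ∘ tmul A = n ∘ (tree_lift ⊠ lift).
Proof.
  apply (str_ext_eq _ _ _ _ (n ∘ (g ⊠ b))).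
  - arewrite tmul_eta. merge_tensors. arewrite tree_lift_eta. rewrite tensm_lr. cat_norm.
    arewrite n_unitl. arewrite (lam_nat MC). reflexivity.
  - arewrite tmul_cons. unfold lift, R_alg. cat_norm. arewrite eta_nat. arewrite b_eta.
    cat_norm. arewrite tree_lift_cons. merge_tensors. arewrite (mu_nat M tree_lift).
    arewrite <- b_mu. rewrite !Mm_comp. merge_tensors. reflexivity.
  - merge_tensors. arewrite tree_lift_cons. rewrite !tensm_comp_idl. cat_norm.
    arewrite n_assoc. merge_tensors. arewrite (alpha_nat MC g (b ∘ Mm M tree_lift) lift).
    merge_tensors. rewrite n_b_Mm. unfold GA_str. merge_tensors.
    arewrite <- (tensm_comp MC). cat_norm. reflexivity.
Qed.

Lemma lift_rmul : lift ∘ rmul A = n ∘ (lift ⊠ lift).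
Proof.
  unfold rmul. cat_norm. arewrite lift_mu. repeat arewrite <- (Mm_comp M).
  rewrite lift_tmul. change (lift ⊠ lift) with ((b ∘ Mm M tree_lift) ⊠ lift).
  rewrite n_b_Mm. reflexivity.
Qed.

Lemma lift_adj_unit : lift ∘ adj_unit A = g.
Proof.
  unfold adj_unit. cat_norm. arewrite lift_eta. arewrite tree_lift_cons. merge_tensors.
  fold lift. arewrite lift_eta. arewrite tree_lift_eta.
  rewrite tensm_rl. cat_norm. arewrite n_unitr. arewrite (rho_nat MC g).
  arewrite (rho_iso1 MC A). cat_norm. reflexivity.
Qed.

Lemma lift_unique (h : hom (R A) Y) :
  h ∘ mu M (T A I) = b ∘ Mm M h -> h ∘ rmul A = n ∘ (h ⊠ h) ->
  h ∘ runit A = v -> h ∘ adj_unit A = g -> h = lift.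
Proof.
  intros h_mu h_rmul h_runit h_adj_unit.
  assert (h_eta : h ∘ eta M (T A I) = tree_lift).
  { apply free_ext_unique.
    - rewrite <- comp_assoc. exact h_runit.
    - arewrite <- (rmul_adj_unit A). arewrite h_rmul. merge_tensors.
      rewrite h_adj_unit, Mm_comp. cat_norm. arewrite <- h_mu. arewrite mu_eta_r. cat_norm.
      reflexivity. }
  unfold lift. rewrite <- h_eta, Mm_comp. cat_norm. arewrite <- h_mu. arewrite mu_eta_r.
  cat_norm. reflexivity.
Qed.

Lemma adj_unit_universal :
  exists! h : hom (R A) Y,
    is_EMMon_hom M (R A) (mu M (T A I)) (rmul A) (runit A) Y b n v h /\ h ∘ adj_unit A = g.
Proof.
  exists lift. split.
  - split; [split; [apply lift_mu | split; [apply lift_rmul | apply lift_runit]] |].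
    apply lift_adj_unit.
  - intros h [[h_mu [h_rmul h_runit]] h_adj_unit]. symmetry. apply lift_unique; assumption.
Qed.

End UniversalProperty.
End Resumption.

Theorem theorem11 (C : Cat) (MC : Monoidal C) (M : StrongMonad MC)
    (T : C -> C -> C)
    (cons : forall A X : C, hom (tens MC A (Mo M (T A X))) (T A X))
    (etaF : forall A X : C, hom X (T A X))
    (Hfree : AlgFree M T cons etaF) (Hstr : StronglyGenerated M T cons etaF) :
  LeftAdjointToU M
    (fun A => Mo M (T A (unitI MC)))
    (fun A => mu M (T A (unitI MC)))
    (fun A => frak_m M T cons etaF Hfree Hstr A)
    (fun A => frak_u M T etaF A)
    (fun A B f => Mm M (t_f M T cons etaF Hfree A B f)).
Proof.
  split; [| split; [| split; [| split]]].
  - intro A. rewrite frak_m_eq. apply is_EMMonoid_R.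
  - intros A B f. rewrite !frak_m_eq. apply is_EMMon_hom_Mt_f.
  - intro A. rewrite t_f_id. apply Mm_id.
  - intros A B D f g. rewrite t_f_comp. apply Mm_comp.
  - exists (adj_unit M T cons etaF). split.
    + intros A B f. apply adj_unit_nat.
    + intros A Y b n v (b_eta & b_mu & n_assoc & n_unitl & n_unitr & n_b) g.
      rewrite frak_m_eq. apply adj_unit_universal; assumption.
Qed.
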